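(* Let $(A,B,R)$ be a normalized formal context. Then every join-irreducible element of the lattice $(\mathcal{C}_N,\leq)$ is an atom of $(\mathcal{C}_N,\leq)$.
   Context: A formal context is a triple $(A,B,R)$ with $R\subseteq A\times B$. The necessity operators are $X^{\uparrow_N}=\{a\in A\mid \text{for all } b\in B,\ (a,b)\in R\Rightarrow b\in X\}$ for $X\subseteq B$, and $Y^{\downarrow^N}=\{b\in B\mid \text{for all } a\in A,\ (a,b)\in R\Rightarrow a\in Y\}$ for $Y\subseteq A$. $\mathcal{C}_N=\{(X,Y)\mid X\subseteq B,\ Y\subseteq A,\ X^{\uparrow_N}=Y,\ Y^{\downarrow^N}=X\}$, ordered by $(X_1,Y_1)\leq(X_2,Y_2)$ iff $X_1\subseteq X_2$ (equivalently $Y_1\subseteq Y_2$); it is a complete lattice with join $(X_1\cup X_2,Y_1\cup Y_2)$, meet $(X_1\cap X_2,Y_1\cap Y_2)$ and bottom $(\varnothing,\varnothing)$. The context is normalized if for every $a\in A$ there are $b,b'\in B$ with $(a,b)\in R$, $(a,b')\notin R$, and for every $b\in B$ there are $a,a'\in A$ with $(a,b)\in R$, $(a',b)\notin R$. An element $x$ of a lattice is join-irreducible if $x$ is not the bottom element and $x=y\vee z$ implies $x=y$ or $x=z$; an atom is an element $x$ covering the bottom $\bot$, i.e. $\bot<x$ and no $y$ with $\bot<y<x$. *)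

Set Implicit Arguments.

Definition subset {T : Type} (X Y : T -> Prop) : Prop := forall t, X t -> Y t.
Definition same_set {T : Type} (X Y : T -> Prop) : Prop := forall t, X t <-> Y t.
Definition setU {T : Type} (X Y : T -> Prop) : T -> Prop := fun t => X t \/ Y t.
Definition set0 {T : Type} : T -> Prop := fun _ => False.

Definition upN {A B : Type} (R : A -> B -> Prop) (X : B -> Prop) : A -> Prop :=
  fun a => forall b, R a b -> X b.
Definition downN {A B : Type} (R : A -> B -> Prop) (Y : A -> Prop) : B -> Prop :=
  fun b => forall a, R a b -> Y a.

Definition inCN {A B : Type} (R : A -> B -> Prop) (X : B -> Prop) (Y : A -> Prop) : Prop :=
  same_set (upN R X) Y /\ same_set (downN R Y) X.

Definition normalized {A B : Type} (R : A -> B -> Prop) : Prop :=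
  (forall a, (exists b, R a b) /\ (exists b', ~ R a b')) /\
  (forall b, (exists a, R a b) /\ (exists a', ~ R a' b)).

Definition leCN {A B : Type} (p q : (B -> Prop) * (A -> Prop)) : Prop :=
  subset (fst p) (fst q).
Definition eqCN {A B : Type} (p q : (B -> Prop) * (A -> Prop)) : Prop :=
  same_set (fst p) (fst q) /\ same_set (snd p) (snd q).
Definition ltCN {A B : Type} (p q : (B -> Prop) * (A -> Prop)) : Prop :=
  leCN p q /\ ~ eqCN p q.
Definition joinCN {A B : Type} (p q : (B -> Prop) * (A -> Prop)) : (B -> Prop) * (A -> Prop) :=
  (setU (fst p) (fst q), setU (snd p) (snd q)).
Definition botCN {A B : Type} : (B -> Prop) * (A -> Prop) := (set0, set0).

Definition in_CN {A B : Type} (R : A -> B -> Prop) (p : (B -> Prop) * (A -> Prop)) : Prop :=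
  inCN R (fst p) (snd p).

Definition join_irreducible {A B : Type} (R : A -> B -> Prop) (x : (B -> Prop) * (A -> Prop)) : Prop :=
  in_CN R x /\ ~ eqCN x botCN /\
  (forall y z, in_CN R y -> in_CN R z -> eqCN x (joinCN y z) -> eqCN x y \/ eqCN x z).

Definition atom {A B : Type} (R : A -> B -> Prop) (x : (B -> Prop) * (A -> Prop)) : Prop :=
  in_CN R x /\ ltCN botCN x /\
  ~ (exists y, in_CN R y /\ ltCN botCN y /\ ltCN y x).

(** Under normalization every necessity concept (X, Y) is "exact": each
    object has some attribute, so Y = upN X consists precisely of the
    objects all (equivalently, some) of whose attributes lie in X, and
    dually.  Hence the complement (~X, ~Y) of a concept is again a concept,
    and so is every relative difference (X \ X', Y \ Y').  If bot < y < x,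
    then x = y ∨ (x \ y) with neither summand equal to x, so a
    join-irreducible x has no such y. *)

From Stdlib Require Import Classical.

Definition setI {T : Type} (X Y : T -> Prop) : T -> Prop := fun t => X t /\ Y t.
Definition setC {T : Type} (X : T -> Prop) : T -> Prop := fun t => ~ X t.

Lemma setU_setID {T : Type} {X X' : T -> Prop} :
  subset X' X -> same_set X (setU X' (setI X (setC X'))).
Proof.
  intros HX' t; unfold setU, setI, setC; split.
  - intros Xt; destruct (classic (X' t)); auto.
  - intros [X't | [Xt _]]; auto.
Qed.

Lemma eqCN_sym {A B : Type} (p q : (B -> Prop) * (A -> Prop)) :
  eqCN p q -> eqCN q p.
Proof. intros [E1 E2]; split; intro t; symmetry; auto. Qed.

Section NecessityConcepts.

Context {A B : Type} (R : A -> B -> Prop).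

Lemma upN_mono {X X' : B -> Prop} : subset X X' -> subset (upN R X) (upN R X').
Proof. intros HX a Ha b Rab; apply HX, Ha, Rab. Qed.

Lemma upN_set0 : (forall a, exists b, R a b) -> same_set (upN R set0) set0.
Proof.
  intros Htot a; split; [| intros []].
  intros Ha; destruct (Htot a) as [b Rab]; exact (Ha b Rab).
Qed.

Lemma upN_setC (X : B -> Prop) (Y : A -> Prop) :
  (forall a, exists b, R a b) -> inCN R X Y -> same_set (upN R (setC X)) (setC Y).
Proof.
  intros Htot [HY HX] a; unfold setC; split.
  - intros Ha Ya; destruct (Htot a) as [b Rab].
    apply (Ha b Rab); apply (proj2 (HY a) Ya b Rab).
  - intros nYa b Rab Xb; apply nYa; apply (proj2 (HX b) Xb a Rab).
Qed.

Lemma inCN_setI (X X' : B -> Prop) (Y Y' : A -> Prop) :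
  inCN R X Y -> inCN R X' Y' -> inCN R (setI X X') (setI Y Y').
Proof.
  intros [HY HX] [HY' HX']; unfold setI; split; intro t; split.
  - intros H; split; [apply HY | apply HY']; intros b Rb; apply (H b Rb).
  - intros [Yt Y't] b Rb; split; [apply (proj2 (HY t) Yt) | apply (proj2 (HY' t) Y't)]; exact Rb.
  - intros H; split; [apply HX | apply HX']; intros a Ra; apply (H a Ra).
  - intros [Xt X't] a Ra; split; [apply (proj2 (HX t) Xt) | apply (proj2 (HX' t) X't)]; exact Ra.
Qed.

Lemma concept_set0 (X : B -> Prop) (Y : A -> Prop) :
  (forall a, exists b, R a b) -> inCN R X Y -> same_set X set0 -> eqCN (X, Y) botCN.
Proof.
  intros Htot [HY _] HX0; split; [exact HX0 |]; intro a; simpl.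
  rewrite <- (HY a), <- (upN_set0 Htot a).
  split; intros Ha b Rab; apply HX0; apply (Ha b Rab).
Qed.

End NecessityConcepts.

Lemma inCN_flip {A B : Type} (R : A -> B -> Prop) X Y :
  inCN R X Y -> inCN (fun b a => R a b) Y X.
Proof. intros [HY HX]; split; assumption. Qed.

Lemma inCN_setC {A B : Type} (R : A -> B -> Prop) X Y :
  normalized R -> inCN R X Y -> inCN R (setC X) (setC Y).
Proof.
  intros [HA HB] Hc; split.
  - apply upN_setC; [intro a; apply (HA a) | exact Hc].
  - apply (upN_setC (fun b a => R a b)); [intro b; apply (HB b) | now apply inCN_flip].
Qed.

Lemma in_CN_rel_compl {A B : Type} {R : A -> B -> Prop} {x y : (B -> Prop) * (A -> Prop)} :
  normalized R -> in_CN R x -> in_CN R y -> leCN y x ->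
  exists z, in_CN R z /\ eqCN x (joinCN y z) /\ (eqCN x z -> eqCN y botCN).
Proof.
  destruct x as [X Y], y as [X' Y']; unfold in_CN, leCN; simpl.
  intros HN Hx Hy HX'X.
  assert (HY'Y : subset Y' Y).
  { intros a Y'a; apply (proj1 Hx a), (upN_mono R HX'X), (proj2 (proj1 Hy a)), Y'a. }
  exists (setI X (setC X'), setI Y (setC Y')); split; [| split; [split |]].
  - apply inCN_setI; [exact Hx | now apply inCN_setC].
  - exact (setU_setID HX'X).
  - exact (setU_setID HY'Y).
  - intros [EX _]; apply (concept_set0 R); [intro a; apply (proj1 HN a) | exact Hy |].
    intro b; split; [| intros []].
    intros X'b; apply (proj2 (proj1 (EX b) (HX'X b X'b))), X'b.
Qed.

Theorem mainTheorem2 (A B : Type) (R : A -> B -> Prop) :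
  normalized R ->
  forall x : (B -> Prop) * (A -> Prop), join_irreducible R x -> atom R x.
Proof.
  intros HN x [Hx [Hx0 Hirr]].
  split; [exact Hx |]; split.
  - split; [intros t [] | intros H0; apply Hx0, eqCN_sym, H0].
  - intros [y [Hy [[_ Hy0] [Hyx Hxy]]]].
    destruct (in_CN_rel_compl HN Hx Hy Hyx) as [z [Hz [Hjoin Hz0]]].
    destruct (Hirr y z Hy Hz Hjoin) as [Exy | Exz].
    + apply Hxy, eqCN_sym, Exy.
    + apply Hy0, eqCN_sym, Hz0, Exz.
Qed.
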